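(* Let $w \in \mathfrak{S}_n$ and $i \in \textsf{supp}(w)$. If $i$ is unconfined in some reduced word $s$ of $w$, then the letter $i$ appears exactly once in every reduced word of $w$, and $i$ is unconfined in every reduced word of $w$.
   Context: $\sigma_i$ ($1\le i\le n-1$) is the simple transposition swapping $i$ and $i+1$; products are compositions of maps. A reduced word of $w$ is a word $i_1\cdots i_\ell$ of minimal length with $w=\sigma_{i_1}\cdots\sigma_{i_\ell}$; $R(w)$ is the set of reduced words. $\textsf{supp}(w)$ is the set of letters appearing in (any) reduced word of $w$. Given a reduced word $s$ of $w$ in which the letter $i$ appears exactly once, $i$ is called unconfined in $s$ if that occurrence of $i$ does not lie between two occurrences of $i+1$ in $s$ and does not lie between two occurrences of $i-1$ in $s$. *)

From mathcomp Require Import all_boot all_fingroup.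
Set Implicit Arguments. Unset Strict Implicit. Unset Printing Implicit Defensive.

(* Letters are natural numbers 1 <= i <= n-1; the letter i denotes the simple
   transposition sigma_i swapping i and i+1 (1-indexed), i.e. swapping the
   ordinals i-1 and i of 'I_n (0-indexed). *)
Definition valid_letter (n i : nat) : bool := (0 < i) && (i < n).

Definition sigma (n i : nat) : 'S_n :=
  match n as m return 'S_m with
  | 0 => 1%g
  | m.+1 => if valid_letter m.+1 i then tperm (inord i.-1 : 'I_m.+1) (inord i)
            else 1%g
  end.

(* Products are compositions of maps: word_perm [:: i1; ...; il] is the map
   sigma_{i1} o ... o sigma_{il}.  In MathComp, (p * q) x = q (p x), hence
   sigma_{i1} o rest = rest * sigma_{i1}. *)
Fixpoint word_perm (n : nat) (s : seq nat) : 'S_n :=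
  match s with
  | [::] => 1%g
  | i :: s' => (word_perm n s' * sigma n i)%g
  end.

Definition is_word_of (n : nat) (w : 'S_n) (s : seq nat) : Prop :=
  all (valid_letter n) s /\ word_perm n s = w.

Definition reduced_word (n : nat) (w : 'S_n) (s : seq nat) : Prop :=
  is_word_of w s /\ forall t, is_word_of w t -> size s <= size t.

Definition in_supp (n : nat) (w : 'S_n) (i : nat) : Prop :=
  exists s, reduced_word w s /\ i \in s.

Definition between (j i : nat) (s : seq nat) : bool :=
  (j \in take (index i s) s) && (j \in drop (index i s).+1 s).

(* i is unconfined in s (meant for words where i occurs exactly once). *)
Definition unconfined (i : nat) (s : seq nat) : bool :=
  ~~ between i.+1 i s && ~~ between i.-1 i s.

From mathcomp Require Import all_boot all_fingroup zify.
Set Implicit Arguments. Unset Strict Implicit. Unset Printing Implicit Defensive.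

(* Positions are 0-indexed, so sigma_i exchanges positions i-1 and i and the letter i
   is the only one that moves an element across the wall between them.  Along a reduced
   word every letter creates exactly one new inversion and inversion sets only grow.
   If s = a i r is a reduced word of w with i in neither a nor r, then w moves exactly
   one element x0 across the wall to the right and one element y0 to the left, and,
   since a reduced word contains the letter i+1 (resp. i-1) iff its permutation moves
   position i (resp. i-1), "i is unconfined in s" becomes the condition
   (w y0 = i-1 or x0 = i-1) and (w x0 = i or y0 = i) on w alone.  Under this condition
   each occurrence of i in a reduced word t of w must exchange an element coming from
   the left of the wall with one coming from the right, so i occurs in t as often as w
   moves elements across the wall, i.e. once; and i is then unconfined in t by the same
   equivalence. *)

Definition tswap (j m : nat) : nat :=
  if m == j.-1 then j else if m == j then j.-1 else m.

Lemma exists_descent_nat (g : nat -> nat) m d :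
  g (m + d) < g m -> exists2 k, m < k <= m + d & g k < g k.-1.
Proof.
elim: d => [|d IH]; first by rewrite addn0 ltnn.
rewrite addnS => lt_m; have [/IH[k k_in gk]|ge_m] := ltnP (g (m + d)) (g m).
  by exists k => //; lia.
by exists (m + d).+1 => //=; lia.
Qed.

Lemma unconfined_cat i s t : i \notin s ->
  unconfined i (s ++ i :: t) =
  ~~ ((i.+1 \in s) && (i.+1 \in t)) && ~~ ((i.-1 \in s) && (i.-1 \in t)).
Proof.
move=> i_s; rewrite /unconfined /between (index_pivot _ i_s) take_size_cat //.
by rewrite -cat_rcons drop_size_cat ?size_rcons.
Qed.

Lemma count_mem1_cat (T : eqType) (x : T) s : count_mem x s = 1 ->
  exists s1 s2, [/\ s = s1 ++ x :: s2, x \notin s1 & x \notin s2].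
Proof.
move=> c1; have xs : x \in s by rewrite -has_pred1 has_count c1.
move: c1; case/splitPr: xs => s1 s2; rewrite count_cat /= eqxx /= => c1.
by exists s1, s2; split=> //; apply/count_memPn; lia.
Qed.

Section Walls.
Variable n : nat.
Implicit Types (p w : 'S_n) (u v x y : 'I_n) (s t : seq nat).

Lemma sigmaE j x : valid_letter n j -> sigma n j x = tswap j x :> nat.
Proof.
case: n x => [[]//|m] x Hj; rewrite /sigma Hj /tswap.
have /andP[j_gt0 j_lt] := Hj.
have Ej1 : (inord j.-1 : 'I_m.+1) = j.-1 :> nat by rewrite inordK //; lia.
have Ej : (inord j : 'I_m.+1) = j :> nat by rewrite inordK.
case: tpermP => [->|->|xj1 xj]; rewrite ?Ej1 ?Ej ?eqxx //.
  by rewrite ifF //; apply/eqP; lia.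
case: eqP => [E|_]; first by case: xj1; apply/val_inj; rewrite /= Ej1.
by case: eqP => // E; case: xj; apply/val_inj; rewrite /= Ej.
Qed.

Lemma sigma_invalid j : ~~ valid_letter n j -> sigma n j = 1%g.
Proof. by rewrite /sigma; case: n => // m /negbTE ->. Qed.

Lemma sigma_wall j k x : j != k -> (sigma n j x < k) = (x < k).
Proof.
have [Hj jk|/sigma_invalid -> _] := boolP (valid_letter n j); last by rewrite perm1.
rewrite sigmaE // /tswap.
by case: (_ =P j.-1) => [->|_]; last case: (_ =P j) => [->|_]; lia.
Qed.

Lemma word_perm_cat s t : word_perm n (s ++ t) = (word_perm n t * word_perm n s)%g.
Proof. by elim: s => [|j s IH] /=; rewrite ?mulg1 // IH mulgA. Qed.

Lemma word_perm_cons j t x : word_perm n (j :: t) x = sigma n j (word_perm n t x).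
Proof. exact: permM. Qed.

Lemma word_perm_cat_cons i s t x :
  word_perm n (s ++ i :: t) x = word_perm n s (sigma n i (word_perm n t x)).
Proof. by rewrite word_perm_cat permM word_perm_cons. Qed.

Lemma word_perm_wall k t x : k \notin t -> (word_perm n t x < k) = (x < k).
Proof.
elim: t => [|j t IH]; first by rewrite perm1.
by rewrite inE negb_or word_perm_cons => /andP[kj /IH <-]; rewrite sigma_wall // eq_sym.
Qed.

Lemma word_perm_fix t x : (x : nat) \notin t -> x.+1 \notin t -> word_perm n t x = x.
Proof.
move=> /(word_perm_wall x) w_lt /(word_perm_wall x) w_le.
by apply/val_inj/eqP; rewrite eqn_leq -ltnS w_le ltnSn leqNgt w_lt ltnn.
Qed.

(** * Inversions and reduced words *)

Definition inversions p : {set 'I_n * 'I_n} :=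
  [set xy : 'I_n * 'I_n | (xy.1 < xy.2) && (p xy.2 < p xy.1)].

Lemma mem_inversions p x y : ((x, y) \in inversions p) = (x < y) && (p y < p x).
Proof. by rewrite inE. Qed.

Lemma perm_val_eq p x y : (p x == p y :> nat) = (x == y :> nat).
Proof. by rewrite !val_eqE (inj_eq perm_inj). Qed.

Lemma exists_preimages p j : valid_letter n j ->
  exists a b, p a = j.-1 :> nat /\ p b = j :> nat.
Proof.
case/andP=> j_gt0 j_lt; have j1_lt : j.-1 < n by lia.
by exists ((p^-1)%g (Ordinal j1_lt)), ((p^-1)%g (Ordinal j_lt)); rewrite !permKV.
Qed.

Lemma inversions_mul_sigma p j a b : valid_letter n j ->
  p a = j.-1 :> nat -> p b = j :> nat ->
  inversions (p * sigma n j) =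
    if a < b then (a, b) |: inversions p else inversions p :\ (b, a).
Proof.
move=> Hj pa pb; have j_gt0 : 0 < j by case/andP: Hj.
have Ea z : (p z == j.-1 :> nat) = (z == a) by rewrite -pa perm_val_eq.
have Eb z : (p z == j :> nat) = (z == b) by rewrite -pb perm_val_eq.
have sE z : sigma n j (p z) = (if z == a then j else if z == b then j.-1 else p z) :> nat.
  by rewrite sigmaE // /tswap Ea Eb.
have ab : a != b by apply/eqP => ab; move: pa; rewrite ab pb; lia.
case: ifP => a_b; apply/setP => -[x y].
all: rewrite ?in_setU1 ?in_setD1 !mem_inversions xpair_eqE !permM !sE.
all: have := Ea x; have := Eb x; have := Ea y; have := Eb y.
all: move: ab; rewrite -!val_eqE /=.
all: by do ?case: ifP; lia.
Qed.

Lemma card_inversions_mul_sigma p j :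
  #|inversions (p * sigma n j)| <= #|inversions p|.+1.
Proof.
have [Hj|/sigma_invalid ->] := boolP (valid_letter n j); last by rewrite mulg1.
have [a [b [pa pb]]] := exists_preimages p Hj.
rewrite (inversions_mul_sigma Hj pa pb); case: ifP => _.
  by rewrite cardsU1 -add1n leq_add2r leq_b1.
by rewrite (leq_trans (subset_leq_card (subsetDl _ _))).
Qed.

Lemma card_inversions_word t : #|inversions (word_perm n t)| <= size t.
Proof.
elim: t => [|j t IH] /=.
  by rewrite leqn0 cards_eq0; apply/eqP/setP => -[x y]; rewrite inE !perm1 inE; lia.
exact: leq_trans (card_inversions_mul_sigma _ j) _.
Qed.

Lemma perm_homo_ltn_id p : (forall x y, x < y -> p x < p y) -> p = 1%g.
Proof.
have ge_id (q : 'S_n) : (forall x y, x < y -> q x < q y) -> forall x, x <= q x.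
  move=> q_homo x; have [k xE] : exists k, x = k :> nat by exists x.
  elim: k x xE => [|k IH] x xE; first by rewrite xE.
  have k_lt : k < n by have := ltn_ord x; lia.
  by rewrite xE (leq_ltn_trans (IH (Ordinal k_lt) erefl)) // q_homo //= xE.
move=> p_homo; have pV_homo x y : x < y -> (p^-1)%g x < (p^-1)%g y.
  by move=> xy; rewrite ltnNge; apply: contraTN xy; rewrite leq_eqVlt perm_val_eq
    => /orP[/eqP<-|/p_homo]; rewrite ?ltnn // !permKV -leqNgt => /ltnW.
apply/permP => x; apply/val_inj/eqP; rewrite perm1 /= eqn_leq ge_id // andbT.
by rewrite -{2}(permK p x) ge_id.
Qed.

Lemma exists_descent p x y : x < y -> p y < p x ->
  exists j a b, [/\ valid_letter n j, p a = j.-1 :> nat, p b = j :> nat & b < a].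
Proof.
move=> xy pyx; pose g k : nat := (p^-1)%g (insubd x k).
have gE z : g (p z) = z by rewrite /g valKd permK.
have : g (p y + (p x - p y)) < g (p y) by rewrite subnKC ?gE // ltnW.
case/exists_descent_nat => k k_in gk.
have k_lt : k < n by have := ltn_ord (p x); lia.
have k1_lt : k.-1 < n by lia.
exists k, ((p^-1)%g (insubd x k.-1)), ((p^-1)%g (insubd x k)).
rewrite !permKV !val_insubd k_lt k1_lt; split=> //; rewrite /valid_letter; lia.
Qed.

Lemma sigmaK j : (sigma n j * sigma n j)%g = 1%g.
Proof.
by rewrite /sigma; case: n => [|m]; rewrite ?mulg1 //; case: ifP; rewrite ?tperm2 ?mulg1.
Qed.

Lemma exists_word_of_length p : exists2 t, is_word_of p t & size t = #|inversions p|.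
Proof.
move: {2}#|inversions p| (erefl #|inversions p|) => k; elim: k p => [|k IH] p pk.
  suff p1 : p = 1%g by exists [::].
  have no_inv : inversions p = set0 by apply/eqP; rewrite -cards_eq0 -pk.
  apply: perm_homo_ltn_id => x y xy; rewrite ltnNge leq_eqVlt perm_val_eq.
  have: (x, y) \notin inversions p by rewrite no_inv inE.
  rewrite mem_inversions xy /= => /negbTE ->; rewrite orbF.
  by apply: contraTN xy => /eqP ->; rewrite ltnn.
have [[x y]] : exists xy, xy \in inversions p by apply/card_gt0P; rewrite pk.
rewrite mem_inversions => /andP[xy pyx].
have [j [a [b [Hj pa pb ba]]]] := exists_descent xy pyx.
have card_pj : #|inversions (p * sigma n j)| = k.
  move: pk; rewrite (inversions_mul_sigma Hj pa pb) ltnNge (ltnW ba) /=.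
  by rewrite (cardsD1 (b, a)) mem_inversions ba pa pb ltn_predL; case/andP: Hj => -> _ [].
have [t [t_valid t_p] t_size] := IH _ card_pj.
exists (j :: t); last by rewrite /= t_size card_pj pk.
by split; rewrite /= ?Hj ?t_p // -mulgA sigmaK mulg1.
Qed.

Lemma reduced_wordP w t :
  reduced_word w t <-> is_word_of w t /\ #|inversions w| = size t.
Proof.
split=> [[[t_valid t_w] t_min]|[[t_valid t_w] card_w]].
  have [t0 t0_word t0_size] := exists_word_of_length w.
  have := t_min _ t0_word; have := card_inversions_word t.
  by rewrite t_w t0_size; split=> //; apply/eqP; rewrite eqn_leq; apply/andP.
by split=> // u [_ u_w]; rewrite -card_w -u_w card_inversions_word.
Qed.

Lemma reduced_word_cat w s t : reduced_word w (s ++ t) ->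
  reduced_word (word_perm n s) s /\ reduced_word (word_perm n t) t.
Proof.
case=> [[st_valid st_w] st_min]; have := st_valid; rewrite all_cat => /andP[s_valid t_valid].
split; split=> // u [u_valid u_w].
  rewrite -(leq_add2r (size t)) -!size_cat; apply: st_min.
  by split; rewrite ?all_cat ?u_valid ?t_valid // word_perm_cat u_w -word_perm_cat.
rewrite -(leq_add2l (size s)) -!size_cat; apply: st_min.
by split; rewrite ?all_cat ?u_valid ?s_valid // word_perm_cat u_w -word_perm_cat.
Qed.

Lemma reduced_word_cons w j t : reduced_word w (j :: t) ->
  exists a b, [/\ word_perm n t a = j.-1 :> nat, word_perm n t b = j :> nat, a < b &
    inversions w = (a, b) |: inversions (word_perm n t)].
Proof.
move=> red; have [[/andP[Hj _] jt_w] _] := red.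
have [_ /reduced_wordP[_ card_t]] := reduced_word_cat (s := [:: j]) red.
have [a [b [ta tb]]] := exists_preimages (word_perm n t) Hj.
case/reduced_wordP: red => _; rewrite -jt_w /= (inversions_mul_sigma Hj ta tb).
case: (ltnP a b) => [ab|ba] card_w; first by exists a, b.
have := subset_leq_card (subsetDl (inversions (word_perm n t)) [set (b, a)]).
by rewrite card_w card_t ltnn.
Qed.

Lemma inversions_suffix w s t : reduced_word w (s ++ t) ->
  inversions (word_perm n t) \subset inversions w.
Proof.
elim: s w => [|j s IH] w /= red; first by case: red => [[_ <-]].
have [a [b [_ _ _ ->]]] := reduced_word_cons red.
have [_ /IH] := reduced_word_cat (s := [:: j]) red.
by move/subset_trans; apply; apply: subsetUr.
Qed.

(** * Crossing a wall *)

(* The wall k separates the positions below k from the others; [cross_right k p] and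
   [cross_left k p] are the elements that p moves across it in either direction. *)
Definition cross_right (k : nat) p : {set 'I_n} := [set x : 'I_n | (x < k) && (k <= p x)].
Definition cross_left (k : nat) p : {set 'I_n} := [set y : 'I_n | (k <= y) && (p y < k)].

Lemma card_cross_left k p : #|cross_left k p| = #|cross_right k p|.
Proof.
pose L : {set 'I_n} := [set x : 'I_n | x < k].
have ->: cross_left k p = p @^-1: L :\: L by apply/setP => x; rewrite !inE -leqNgt andbC.
have ->: cross_right k p = L :\: p @^-1: L by apply/setP => x; rewrite !inE -leqNgt andbC.
apply/eqP; rewrite -(eqn_add2l #|L :&: p @^-1: L|) {1}setIC !cardsID.
by rewrite card_preimset //; apply: perm_inj.
Qed.

Lemma cross_right_mul_sigma k j p : j != k ->
  cross_right k (p * sigma n j) = cross_right k p.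
Proof.
by move=> jk; apply/setP => x; rewrite !inE permM [k <= _]leqNgt sigma_wall // -leqNgt.
Qed.

Lemma card_cross_right_mul_sigma_wall k p a b : valid_letter n k ->
  p a = k.-1 :> nat -> p b = k :> nat -> a < k <= b ->
  #|cross_right k (p * sigma n k)| = #|cross_right k p|.+1.
Proof.
move=> Hk pa pb /andP[ak kb].
have Ea z : (p z == k.-1 :> nat) = (z == a :> nat) by rewrite -pa perm_val_eq.
have Eb z : (p z == k :> nat) = (z == b :> nat) by rewrite -pb perm_val_eq.
have k_gt0 : 0 < k by case/andP: Hk.
suff -> : cross_right k (p * sigma n k) = a |: cross_right k p.
  by rewrite cardsU1 inE pa ak leqNgt ltn_predL k_gt0.
apply/setP => x; rewrite in_setU1 !inE permM sigmaE // /tswap Ea Eb -val_eqE.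
case: (x =P a :> nat) => [->|_]; first by rewrite ak leqnn.
by case: (x =P b :> nat) => [->|_] //; rewrite ltnNge kb.
Qed.

Lemma cross_right_notin k t : k \notin t -> cross_right k (word_perm n t) = set0.
Proof. by move=> kt; apply/setP => x; rewrite !inE [k <= _]leqNgt word_perm_wall // andbN. Qed.

Lemma subset_inversions_lt p w x y : inversions p \subset inversions w ->
  x < y -> p y < p x -> w y < w x.
Proof.
move=> pw xy pyx; have /(subsetP pw) : (x, y) \in inversions p by rewrite mem_inversions xy.
by rewrite mem_inversions => /andP[].
Qed.

Lemma card_cross_right_mono k p w : inversions p \subset inversions w ->
  #|cross_right k p| <= #|cross_right k w|.
Proof.
move=> pw; have [/subset_leq_card //|/subsetPn[x xp xw]] :=
  boolP (cross_right k p \subset cross_right k w).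
rewrite -!card_cross_left; apply/subset_leq_card/subsetP => y yp.
move: xp xw yp; rewrite !inE => /andP[xk kpx] xw /andP[ky pyk].
have := subset_inversions_lt pw (leq_trans xk ky : x < y) (leq_trans pyk kpx); lia.
Qed.

Lemma card_cross_right_gt0 w j t : reduced_word w t -> j \in t -> 0 < #|cross_right j w|.
Proof.
elim: t w => [//|k t IH] w red; have [_ red_t] := reduced_word_cat (s := [:: k]) red.
have [jt _|jt] := boolP (j \in t).
  apply: leq_trans (IH _ red_t jt) _; apply: card_cross_right_mono.
  exact: (inversions_suffix (s := [:: k]) red).
rewrite inE (negbTE jt) orbF => /eqP jk; subst k.
have [[/andP[Hj _] <-] _] := red; have [a [b [ta tb ab _]]] := reduced_word_cons red.
rewrite /= (card_cross_right_mul_sigma_wall Hj ta tb) //.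
rewrite [j <= _]leqNgt -(word_perm_wall a jt) -(word_perm_wall b jt) ta tb ltnn andbT.
by rewrite ltn_predL; case/andP: Hj.
Qed.

Lemma mem_letter_succ w t x : reduced_word w t -> (x : nat) \notin t ->
  (x.+1 \in t) = (w x != x :> nat).
Proof.
move=> red xt; have [[_ t_w] _] := red.
apply/idP/idP => [x1t|]; last first.
  by apply: contraLR => x1t; rewrite negbK -t_w word_perm_fix.
have /card_gt0P[y] := card_cross_right_gt0 red x1t; rewrite inE => /andP[yx1 xwy].
have := word_perm_wall y xt; have := perm_val_eq w x y; rewrite t_w; lia.
Qed.

Lemma mem_letter_pred w t x : reduced_word w t -> x.+1 \notin t ->
  ((x : nat) \in t) = (w x != x :> nat).
Proof.
move=> red x1t; have [[_ t_w] _] := red.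
apply/idP/idP => [xt|]; last first.
  by apply: contraLR => xt; rewrite negbK -t_w word_perm_fix.
have /card_gt0P[y] := card_cross_right_gt0 red xt; rewrite inE => /andP[yx xwy].
have := word_perm_wall y x1t; have := perm_val_eq w x y; rewrite t_w; lia.
Qed.

Section SingleOccurrence.
Variables (i : nat) (s t : seq nat).
Hypotheses (Hi : valid_letter n i) (i_s : i \notin s) (i_t : i \notin t).

Lemma mem_cross_right_single x :
  (x \in cross_right i (word_perm n (s ++ i :: t))) = (word_perm n t x == i.-1 :> nat).
Proof.
rewrite inE word_perm_cat_cons [i <= _]leqNgt word_perm_wall // sigmaE //.
rewrite -(word_perm_wall x i_t) /tswap; case/andP: Hi => i_gt0 _.
by case: (_ =P i.-1) => [->|_]; last case: (_ =P i) => [->|_]; lia.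
Qed.

Lemma mem_cross_left_single y :
  (y \in cross_left i (word_perm n (s ++ i :: t))) = (word_perm n t y == i :> nat).
Proof.
rewrite inE word_perm_cat_cons word_perm_wall // sigmaE // leqNgt.
rewrite -(word_perm_wall y i_t) /tswap; case/andP: Hi => i_gt0 _.
by case: (_ =P i.-1) => [->|_]; last case: (_ =P i) => [->|_]; lia.
Qed.

Lemma cross_set1_single : exists x0 y0,
  cross_right i (word_perm n (s ++ i :: t)) = [set x0] /\
  cross_left i (word_perm n (s ++ i :: t)) = [set y0].
Proof.
have [x0 [y0 [tx0 ty0]]] := exists_preimages (word_perm n t) Hi.
exists x0, y0; split; apply/setP => z.
  by rewrite mem_cross_right_single in_set1 -val_eqE -(perm_val_eq (word_perm n t)) tx0.
by rewrite mem_cross_left_single in_set1 -val_eqE -(perm_val_eq (word_perm n t)) ty0.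
Qed.

Lemma unconfined_single w x0 y0 : reduced_word w (s ++ i :: t) ->
  x0 \in cross_right i w -> y0 \in cross_left i w ->
  unconfined i (s ++ i :: t) =
  ((w y0 == i.-1 :> nat) || (x0 == i.-1 :> nat)) && ((w x0 == i :> nat) || (y0 == i :> nat)).
Proof.
move=> red; have [[_ <-] _] := red.
rewrite mem_cross_right_single mem_cross_left_single => /eqP tx0 /eqP ty0.
have [red_s red_it] := reduced_word_cat red.
have [_ red_t] := reduced_word_cat (s := [:: i]) red_it.
have /andP[i_gt0 i_lt] := Hi; have i1_lt : i.-1 < n by lia.
pose I := Ordinal i_lt; pose I' := Ordinal i1_lt.
have i1E : I'.+1 = i by rewrite /= prednK.
rewrite unconfined_cat //.
rewrite (mem_letter_succ (x := I) red_s) // (mem_letter_succ (x := I) red_t) //.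
rewrite (mem_letter_pred (x := I') red_s) ?i1E // (mem_letter_pred (x := I') red_t) ?i1E //.
have wx0 : word_perm n (s ++ i :: t) x0 = word_perm n s I.
  suff sx0 : sigma n i (word_perm n t x0) = I by rewrite word_perm_cat_cons sx0.
  by apply/val_inj; rewrite /= sigmaE // tx0 /tswap eqxx.
have wy0 : word_perm n (s ++ i :: t) y0 = word_perm n s I'.
  suff sy0 : sigma n i (word_perm n t y0) = I' by rewrite word_perm_cat_cons sy0.
  by apply/val_inj; rewrite /= sigmaE // ty0 /tswap eqxx ifF //; apply/eqP; lia.
have x0E : (x0 == i.-1 :> nat) = (word_perm n t I' == i.-1 :> nat).
  by rewrite -[i.-1 in LHS]/(nat_of_ord I') -(perm_val_eq (word_perm n t)) tx0 eq_sym.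
have y0E : (y0 == i :> nat) = (word_perm n t I == i :> nat).
  by rewrite -[i in LHS]/(nat_of_ord I) -(perm_val_eq (word_perm n t)) ty0 eq_sym.
by rewrite !negb_and !negbK wx0 wy0 x0E y0E andbC.
Qed.

End SingleOccurrence.

(** * The wall condition *)

Section UnconfinedWall.
Variables (i : nat) (w : 'S_n) (x0 y0 : 'I_n).
Hypotheses (i_gt0 : 0 < i)
  (cross_w_right : cross_right i w = [set x0]) (cross_w_left : cross_left i w = [set y0])
  (wall_pred : (w y0 == i.-1 :> nat) || (x0 == i.-1 :> nat))
  (wall_succ : (w x0 == i :> nat) || (y0 == i :> nat)).
(* By [unconfined_single], [wall_pred] (resp. [wall_succ]) says that in a reduced word
   with a single i the letter i-1 (resp. i+1) does not occur on both sides of i. *)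

Let cross_w_rightE (z : 'I_n) : ((z < i) && (i <= w z)) = (z == x0 :> nat).
Proof. by rewrite val_eqE -in_set1 -cross_w_right inE. Qed.

Let cross_w_leftE (z : 'I_n) : ((i <= z) && (w z < i)) = (z == y0 :> nat).
Proof. by rewrite val_eqE -in_set1 -cross_w_left inE. Qed.

Lemma cross_right_uniq p x y : inversions p \subset inversions w ->
  x \in cross_right i p -> y \in cross_right i p -> x = y :> nat.
Proof.
move=> pw xp yp; congr nat_of_ord; apply: (card_le1_eqP _ _ _ yp xp).
by rewrite (leq_trans (card_cross_right_mono i pw)) // cross_w_right cards1.
Qed.

Lemma cross_left_uniq p x y : inversions p \subset inversions w ->
  x \in cross_left i p -> y \in cross_left i p -> x = y :> nat.
Proof.
move=> pw xp yp; congr nat_of_ord; apply: (card_le1_eqP _ _ _ yp xp).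
by rewrite card_cross_left (leq_trans (card_cross_right_mono i pw)) // cross_w_right cards1.
Qed.

(* p is the permutation just after an occurrence of the letter i in a reduced word of w,
   and (u, v) is the inversion created by that occurrence. *)
Lemma new_inversion_right p u v : inversions p \subset inversions w ->
  u < v -> p u = i :> nat -> p v = i.-1 :> nat -> i <= v.
Proof.
move=> pw uv pu pv; rewrite leqNgt; apply/negP => vi.
have inv_w := subset_inversions_lt pw.
have uR : u \in cross_right i p by rewrite inE pu leqnn andbT (ltn_trans uv vi).
have [q] : exists q, q \in cross_left i p.
  by apply/card_gt0P; rewrite card_cross_left; apply/card_gt0P; exists u.
rewrite inE => /andP[iq pqi].
have pq : p q < i.-1 by have := perm_val_eq p q v; lia.
have wvu : w v < w u by apply: inv_w; lia.
have wqv : w q < w v by apply: inv_w; lia.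
have wv : w v < i by have := cross_w_rightE u; have := cross_w_rightE v; lia.
have qy0 : q = y0 :> nat by have := cross_w_leftE q; lia.
have x0E : x0 = i.-1 :> nat by move: wall_pred; have := perm_val_eq w q y0; lia.
have := cross_w_rightE x0; rewrite eqxx => /andP[x0i iwx0].
have vx0 : v < x0 by have := perm_val_eq w x0 v; lia.
have px0 : p x0 < i.-1.
  have x0u : i <= p x0 -> x0 = u :> nat.
    by move=> ipx0; apply: (cross_right_uniq pw) => //; rewrite inE x0i.
  by have := perm_val_eq p x0 v; lia.
by have := inv_w _ _ vx0; rewrite pv => /(_ px0); lia.
Qed.

Lemma new_inversion_left p u v : inversions p \subset inversions w ->
  u < v -> p u = i :> nat -> p v = i.-1 :> nat -> u < i.
Proof.
move=> pw uv pu pv; rewrite ltnNge; apply/negP => iu.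
have inv_w := subset_inversions_lt pw.
have vL : v \in cross_left i p by rewrite inE pv (leq_trans iu (ltnW uv)) ltn_predL.
have [x] : exists x, x \in cross_right i p.
  by apply/card_gt0P; rewrite -card_cross_left; apply/card_gt0P; exists v.
rewrite inE => /andP[xi ipx].
have px : i < p x by have := perm_val_eq p x u; lia.
have wvu : w v < w u by apply: inv_w; lia.
have wux : w u < w x by apply: inv_w; lia.
have iwu : i <= w u by have := cross_w_leftE u; have := cross_w_leftE v; lia.
have xx0 : x = x0 :> nat by have := cross_w_rightE x; lia.
have y0E : y0 = i :> nat by move: wall_succ; have := perm_val_eq w x x0; lia.
have := cross_w_leftE y0; rewrite eqxx => /andP[iy0 wy0i].
have y0u : y0 < u by have := perm_val_eq w y0 u; lia.
have py0 : i < p y0.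
  have y0v : p y0 < i -> y0 = v :> nat.
    by move=> py0i; apply: (cross_left_uniq pw) => //; rewrite inE iy0.
  by have := perm_val_eq p y0 u; have := perm_val_eq p y0 v; lia.
by have := inv_w _ _ y0u; rewrite pu => /(_ py0); lia.
Qed.

Lemma count_mem_cross t : reduced_word (word_perm n t) t ->
  inversions (word_perm n t) \subset inversions w ->
  count_mem i t = #|cross_right i (word_perm n t)|.
Proof.
elim: t => [|j t IH] red tw; first by rewrite cross_right_notin ?cards0.
have [_ red_t] := reduced_word_cat (s := [:: j]) red.
have [a [b [ta tb ab inv_jt]]] := reduced_word_cons red.
have tw' : inversions (word_perm n t) \subset inversions w.
  by apply: subset_trans tw; rewrite inv_jt subsetUr.
rewrite /= IH //; have [ji|ji] := eqVneq j i; last by rewrite cross_right_mul_sigma.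
rewrite {j}ji in red tw ta tb inv_jt *; have [[/andP[Hi _] _] _] := red.
have jta : word_perm n (i :: t) a = i :> nat.
  by rewrite word_perm_cons sigmaE // ta /tswap eqxx.
have jtb : word_perm n (i :: t) b = i.-1 :> nat.
  by rewrite word_perm_cons sigmaE // tb /tswap eqxx ifF //; apply/eqP; lia.
rewrite (card_cross_right_mul_sigma_wall Hi ta tb) //.
by rewrite (new_inversion_left tw ab jta jtb) (new_inversion_right tw ab jta jtb).
Qed.

End UnconfinedWall.

End Walls.

Theorem lemma2p8 (n : nat) (w : 'S_n) (i : nat) :
  in_supp w i ->
  (exists s, reduced_word w s /\ count_mem i s = 1 /\ unconfined i s) ->
  forall t, reduced_word w t -> count_mem i t = 1 /\ unconfined i t.
Proof.
(* [in_supp w i] is implied by the second hypothesis. *)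
move=> _ [s [s_red [s_count s_unc]]] t t_red.
have [a [r [s_ar i_a i_r]]] := count_mem1_cat s_count; subst s.
have [[s_valid s_w] _] := s_red.
have Hi : valid_letter n i by apply: (allP s_valid); rewrite mem_cat mem_head orbT.
have [x0 [y0 []]] := cross_set1_single Hi i_a i_r; rewrite s_w => cross_r cross_l.
have x0_in : x0 \in cross_right i w by rewrite cross_r set11.
have y0_in : y0 \in cross_left i w by rewrite cross_l set11.
move: s_unc; rewrite (unconfined_single Hi i_a i_r s_red x0_in y0_in).
case/andP=> wall_pred wall_succ; have [i_gt0 _] := andP Hi.
have t_count : count_mem i t = 1.
  have [[_ t_w] _] := t_red.
  by rewrite (count_mem_cross i_gt0 cross_r cross_l wall_pred wall_succ) t_w ?cross_r ?cards1.
split=> //; have [a' [r' [t_ar i_a' i_r']]] := count_mem1_cat t_count; subst t.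
by rewrite (unconfined_single Hi i_a' i_r' t_red x0_in y0_in) wall_pred wall_succ.
Qed.
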